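(* Let $t\geq 2$, let $q$ be a prime power and $d\in F_q$. Suppose there is a $2t\times 2t$ matrix $E=(E_1,E_2)$ over $F_q$, with $E_1,E_2$ of size $2t\times t$, such that (1) $E_1$, $E_2$, $E_1+E_2$, $E_1-E_2$ all belong to $M^{(t)}_{2t\times t}(F_q)$, and (2) the $2t\times 2t$ matrices $E$, $(E_1,E_1+dE_2)$, $(E_2,E_1+dE_2)$, $(E_1+E_2,E_1+dE_2)$, $(E_1-E_2,E_1+dE_2)$ are all nonsingular. Then there exists a $q^t$-CMS$(q^t,t)$.
   Context: $M^{(t)}_{k\times s}(F_q)$ denotes the set of $k\times s$ matrices over the finite field $F_q$ in which any $t$ rows are linearly independent. An MS$(n,t)$ is an $n\times n$ matrix with entries $0,\dots,n^2-1$ such that for each $e=1,\dots,t$ the entrywise $e$-th power has all row sums, column sums, main-diagonal sum and back-diagonal sum (entries $(i,n-1-i)$) equal. With $S_e(n)=\frac1n\sum_{k=0}^{n^2-1}k^e$, a family $\{B_0,\dots,B_{m-1}\}$ of MS$(n,t)$s, $B_s=(b^{(s)}_{i,j})$, $i,j\in\{0,\dots,n-1\}$, is an $m$-CMS$(n,t)$ if $\sum_{s}\sum_{j}(b^{(s)}_{i,j})^{t+1}=mS_{t+1}(n)$ for every $i$, $\sum_{s}\sum_{i}(b^{(s)}_{i,j})^{t+1}=mS_{t+1}(n)$ for every $j$, and $\sum_s\sum_i(b^{(s)}_{i,i})^{t+1}=\sum_s\sum_i(b^{(s)}_{i,n-1-i})^{t+1}=mS_{t+1}(n)$. *)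

From HB Require Import structures.
From mathcomp Require Import all_boot all_order all_algebra all_field.
Set Implicit Arguments. Unset Strict Implicit. Unset Printing Implicit Defensive.
Import Order.TTheory GRing.Theory Num.Theory.

(* M^{(t)}_{k x s}(F): every t (distinct) rows are linearly independent. *)
Definition any_rows_indep (F : fieldType) (k s t : nat) (A : 'M[F]_(k, s)) : Prop :=
  forall f : 'I_t -> 'I_k, injective f -> row_free (rowsub f A).

Definition row_pow_sum n (A : 'M[nat]_n) e (i : 'I_n) : nat := \sum_(j < n) (A i j) ^ e.
Definition col_pow_sum n (A : 'M[nat]_n) e (j : 'I_n) : nat := \sum_(i < n) (A i j) ^ e.
Definition diag_pow_sum n (A : 'M[nat]_n) e : nat := \sum_(i < n) (A i i) ^ e.
Definition adiag_pow_sum n (A : 'M[nat]_n) e : nat := \sum_(i < n) (A i (rev_ord i)) ^ e.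

Definition is_MS (n t : nat) (A : 'M[nat]_n) : Prop :=
  (forall i j, A i j < n ^ 2)%N /\
  (forall i j i' j', A i j = A i' j' -> i = i' /\ j = j') /\
  (forall e, (1 <= e <= t)%N ->
     exists c : nat,
       (forall i, row_pow_sum A e i = c) /\
       (forall j, col_pow_sum A e j = c) /\
       diag_pow_sum A e = c /\ adiag_pow_sum A e = c).

Local Open Scope ring_scope.

Definition S_e (e n : nat) : rat :=
  (\sum_(k < n ^ 2) (k ^ e)%N)%:R / n%:R.

Definition is_CMS (m n t : nat) (B : 'I_m -> 'M[nat]_n) : Prop :=
  (forall s, is_MS t (B s)) /\
  (forall i : 'I_n,
     ((\sum_(s < m) row_pow_sum (B s) t.+1 i)%N)%:R = m%:R * S_e t.+1 n :> rat) /\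
  (forall j : 'I_n,
     ((\sum_(s < m) col_pow_sum (B s) t.+1 j)%N)%:R = m%:R * S_e t.+1 n :> rat) /\
  ((\sum_(s < m) diag_pow_sum (B s) t.+1)%N)%:R = m%:R * S_e t.+1 n :> rat /\
  ((\sum_(s < m) adiag_pow_sum (B s) t.+1)%N)%:R = m%:R * S_e t.+1 n :> rat.

(* Encode v in F^(2t) as the integer [cv_nat v] < q^(2t) whose base-q digits
   are the coordinates of v, enumerate F^t as alpha_0, ..., alpha_(n-1) with
   alpha_(n-1-i) = 1 - alpha_i, and let layer s have entries
   [cv_nat (E1 alpha_i + E2 alpha_j + E3 alpha_s)], where E3 = E1 + d E2.
   Every row, column and diagonal of a layer is the image of an affine map
   y |-> c + M y with M one of E2, E1, E1 + E2, E1 - E2 (the back diagonal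
   because of the symmetry of alpha).  For e <= t, [cv_nat v ^ e] is a sum of
   products of at most t digits, and any t coordinates of c + M y are
   uniformly distributed over F^t, so every such line sum equals the average
   q^-t * sum_v cv_nat v ^ e.  For the (t+1)-st powers summed over all layers,
   nonsingularity of (M, E3) makes (y, z) |-> c + M y + E3 z a bijection onto
   F^(2t), so the sum is the full sum of k^(t+1) over k < q^(2t). *)

From mathcomp Require Import all_boot all_order all_algebra all_field.
From mathcomp Require Import zify.
Set Implicit Arguments. Unset Strict Implicit. Unset Printing Implicit Defensive.
Import GRing.Theory Num.Theory.

Section PalindromicEnum.

Variables (T : finType) (tau : T -> T).
Hypothesis tauK : involutive tau.
Hypothesis fixed_uniq : forall x y, tau x = x -> tau y = y -> x = y.

Let lower := [set x | enum_rank x < enum_rank (tau x)].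
Let fixed := [set x | tau x == x].
Let pal := enum lower ++ enum fixed ++ rev (map tau (enum lower)).

Lemma enum_fixed_palindrome :
  rev (enum fixed) = enum fixed /\ map tau (enum fixed) = enum fixed.
Proof.
have size_le1 : size (enum fixed) <= 1.
  rewrite -cardE; apply/card_le1P => x; rewrite inE => /eqP tx y.
  by rewrite !inE; apply/eqP/eqP => [ty|->//]; exact: fixed_uniq.
have map_fixed : map tau (enum fixed) = enum fixed.
  by rewrite -[RHS]map_id; apply/eq_in_map => x; rewrite mem_enum inE => /eqP.
by case: (enum fixed) size_le1 map_fixed => [|a [|b l]].
Qed.

Lemma pal_uniq : uniq pal.
Proof.
have lower_tau x : x \in lower -> tau x \notin lower.
  by rewrite !inE tauK -leqNgt => /ltnW.
rewrite !cat_uniq !enum_uniq rev_uniq (map_inj_uniq (inv_inj tauK)) enum_uniq.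
rewrite andbT /=; apply/andP; split.
  apply/hasPn => x; rewrite mem_cat mem_rev => /orP [].
    by rewrite !mem_enum !inE => /eqP ->; rewrite ltnn.
  by case/mapP => y; rewrite mem_enum => /lower_tau ? ->; rewrite mem_enum.
apply/hasPn => x; rewrite mem_rev; case/mapP => y; rewrite mem_enum => ly ->.
rewrite mem_enum !inE tauK; apply/negP => /eqP e.
by move: ly; rewrite inE -e ltnn.
Qed.

Lemma mem_pal x : x \in pal.
Proof.
rewrite !mem_cat mem_rev !mem_enum; apply/or3P.
have [tx|ntx] := eqVneq (tau x) x; first by apply: Or32; rewrite inE tx.
have : enum_rank x != enum_rank (tau x).
  by apply: contra ntx => /eqP /enum_rank_inj <-.
rewrite neq_ltn => /orP [lt_x|lt_tx]; first by apply: Or31; rewrite inE.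
by apply: Or33; apply/mapP; exists (tau x); rewrite ?tauK // mem_enum inE tauK.
Qed.

Lemma rev_pal : rev pal = map tau pal.
Proof.
rewrite /pal !rev_cat revK !map_cat map_rev -map_comp (eq_map tauK) map_id.
by case: enum_fixed_palindrome => -> ->; rewrite catA.
Qed.

Lemma ord_enum_involutive n : #|T| = n ->
  exists alpha : 'I_n -> T,
    bijective alpha /\ forall i, alpha (rev_ord i) = tau (alpha i).
Proof.
move=> cardT.
have size_pal : size pal == n.
  by rewrite -cardT -(card_uniqP pal_uniq); apply/eqP/eq_card => x; rewrite mem_pal.
exists (tnth (Tuple size_pal)); split.
  apply: inj_card_bij; last by rewrite card_ord cardT.
  by apply/tuple_uniqP; exact: pal_uniq.
move=> i; have x0 := tnth (Tuple size_pal) i.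
have lt_i : i < size pal by rewrite (eqP size_pal).
rewrite !(tnth_nth x0) /=.
have -> : n - i.+1 = size pal - i.+1 by rewrite (eqP size_pal).
by rewrite -nth_rev // rev_pal (nth_map x0).
Qed.

End PalindromicEnum.

Lemma digits_sum_lt (q m : nat) (a : nat -> nat) :
  (forall k, a k < q) -> \sum_(k < m) a k * q ^ k < q ^ m.
Proof.
move=> a_lt; elim: m => [|m IHm]; first by rewrite big_ord0.
rewrite big_ord_recr /= expnS; have := a_lt m; move: IHm.
set X := \sum_(_ < _) _; set Q := q ^ m; nia.
Qed.

Lemma digits_sum_inj (q m : nat) (a b : nat -> nat) :
  (forall k, a k < q) -> (forall k, b k < q) ->
  \sum_(k < m) a k * q ^ k = \sum_(k < m) b k * q ^ k ->
  forall k, k < m -> a k = b k.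
Proof.
move=> a_lt b_lt; elim: m => [|m IHm] // eq_ab.
move: (eq_ab); rewrite !big_ord_recr /= => eq_ab'.
have lt_a := digits_sum_lt m a_lt; have lt_b := digits_sum_lt m b_lt.
have qm_gt0 : 0 < q ^ m by case: (q ^ m) lt_a.
have eq_m : a m = b m.
  have := congr1 (divn^~ (q ^ m)) eq_ab'.
  by rewrite ![_ + _ * _]addnC !divnMDl // !divn_small // !addn0.
move=> k; rewrite ltnS leq_eqVlt => /orP [/eqP -> //|]; apply: IHm.
by move: eq_ab'; rewrite eq_m => /addIn.
Qed.

Section VectorCode.

Variable F : finFieldType.
Local Notation q := #|F|.

(* Padded with [0] beyond [m], so that the nat-indexed digit lemmas apply. *)
Definition cv_digit m (v : 'cV[F]_m) (k : nat) : nat :=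
  if insub k is Some i then enum_rank (v i ord0) else 0.

Definition cv_nat m (v : 'cV[F]_m) : nat := \sum_(k < m) cv_digit v k * q ^ k.

Lemma cv_digit_lt m (v : 'cV[F]_m) k : cv_digit v k < q.
Proof.
by rewrite /cv_digit; case: insub => [i|]; [exact: ltn_ord | exact: ltnW (finNzRing_gt1 F)].
Qed.

Lemma cv_digit_ord m (v : 'cV[F]_m) (i : 'I_m) : cv_digit v i = enum_rank (v i ord0).
Proof. by rewrite /cv_digit valK. Qed.

Lemma cv_nat_lt m (v : 'cV[F]_m) : cv_nat v < q ^ m.
Proof. exact: digits_sum_lt (cv_digit_lt v). Qed.

Lemma cv_nat_inj m : injective (@cv_nat m).
Proof.
move=> v w /(digits_sum_inj (cv_digit_lt v) (cv_digit_lt w)) eq_digits.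
apply/matrixP => i j; rewrite [j]ord1; apply: enum_rank_inj; apply: val_inj.
by rewrite /= -!cv_digit_ord eq_digits.
Qed.

Lemma cv_nat_expE m (v : 'cV[F]_m) e :
  cv_nat v ^ e =
  \sum_(h : {ffun 'I_e -> 'I_m}) \prod_(j < e) (enum_rank (v (h j) ord0) * q ^ h j).
Proof.
rewrite -[in LHS](card_ord e) -prod_nat_const /cv_nat bigA_distr_bigA /=.
by apply: eq_bigr => h _; apply: eq_bigr => j _; rewrite cv_digit_ord.
Qed.

Lemma sum_cv_nat_exp m e :
  \sum_(v : 'cV[F]_m) cv_nat v ^ e = \sum_(k < q ^ m) k ^ e.
Proof.
pose code v : 'I_(q ^ m) := Ordinal (cv_nat_lt v).
have code_bij : bijective code.
  apply: inj_card_bij; first by move=> v w /(congr1 val) /cv_nat_inj.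
  by rewrite card_ord card_mx muln1.
by rewrite [RHS](reindex code) //; exact: onW_bij.
Qed.

End VectorCode.

Local Open Scope ring_scope.

Section AffineSums.

Variables (F : finFieldType) (m k : nat).
Local Notation q := #|F|.

Lemma sum_affine_shift (M : 'M[F]_(m, k)) (f : 'I_k -> 'I_m) (g : 'cV[F]_m -> nat) :
    rowsub f M \in unitmx -> (forall v w, rowsub f v = rowsub f w -> g v = g w) ->
  forall c1 c2 : 'cV[F]_m, (\sum_y g (c1 + M *m y)%R = \sum_y g (c2 + M *m y)%R)%N.
Proof.
move=> Mf_unit g_dep c1 c2.
pose y0 := invmx (rowsub f M) *m (rowsub f c2 - rowsub f c1).
rewrite (reindex_inj (addIr y0)) /=; apply: eq_bigr => y _; apply: g_dep.
rewrite [rowsub f (c1 + _)]raddfD [rowsub f (c2 + _)]raddfD /=.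
rewrite -!mul_rowsub_mx mulmxDr mulKVmx //.
by rewrite (addrC (_ *m y)) addrA [rowsub f c1 + _]addrC subrK.
Qed.

Lemma sum_affine_translates (M : 'M[F]_(m, k)) (g : 'cV[F]_m -> nat) :
  (\sum_(c : 'cV[F]_m) \sum_y g (c + M *m y)%R = q ^ k * \sum_v g v)%N.
Proof.
rewrite exchange_big /= (eq_bigr (fun _ => \sum_v g v)) => [|y _]; last first.
  exact/esym/(reindex_inj (addIr (M *m y))).
by rewrite sum_nat_const card_mx muln1.
Qed.

Lemma sum_affine (M : 'M[F]_(m, k)) (f : 'I_k -> 'I_m) (g : 'cV[F]_m -> nat) :
    rowsub f M \in unitmx -> (forall v w, rowsub f v = rowsub f w -> g v = g w) ->
  forall c : 'cV[F]_m, (q ^ m * \sum_y g (c + M *m y)%R = q ^ k * \sum_v g v)%N.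
Proof.
move=> Mf_unit g_dep c; rewrite -(sum_affine_translates M).
rewrite [RHS](eq_bigr (fun c' => \sum_y g (c + M *m y)%R)%N) => [|c' _]; last first.
  exact: sum_affine_shift Mf_unit g_dep c' c.
by rewrite sum_nat_const card_mx muln1.
Qed.

Lemma exists_inj_cover e (h : 'I_e -> 'I_m) : (e <= k <= m)%N ->
  exists f : 'I_k -> 'I_m, injective f /\ forall j, exists i, h j = f i.
Proof.
case/andP => le_ek le_km; pose A := [set h j | j in 'I_e].
have card_A : (#|A| <= k)%N.
  by apply: leq_trans le_ek; rewrite -[X in (_ <= X)%N]card_ord leq_imset_card.
have : (k - #|A| <= #|~: A|)%N by have := cardsC A; rewrite card_ord; lia.
case/card_geqP => s [uniq_s size_s sub_s].
pose S := enum A ++ s.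
have size_S : size S = k by rewrite size_cat size_s -cardE; lia.
have uniq_S : uniq S.
  rewrite cat_uniq enum_uniq uniq_s andbT /=; apply/hasPn => x /sub_s.
  by rewrite mem_enum inE.
exists (tnth (Tuple (introT eqP size_S))); split; first exact/tuple_uniqP.
move=> j; have hS : h j \in S by rewrite mem_cat mem_enum imset_f.
have lt_j : (index (h j) S < k)%N by rewrite -size_S index_mem.
by exists (Ordinal lt_j); rewrite (tnth_nth (h j)) nth_index.
Qed.

Lemma sum_affine_cv_nat_exp (M : 'M[F]_(m, k)) e (c : 'cV[F]_m) :
    any_rows_indep k M -> (e <= k <= m)%N ->
  (q ^ m * \sum_y cv_nat (c + M *m y)%R ^ e = q ^ k * \sum_(v : 'cV[F]_m) cv_nat v ^ e)%N.
Proof.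
move=> M_indep le_ekm.
rewrite (eq_bigr _ (fun y _ => cv_nat_expE _ _)).
rewrite [in RHS](eq_bigr _ (fun v _ => cv_nat_expE _ _)).
rewrite exchange_big [in RHS]exchange_big !big_distrr /=; apply: eq_bigr => h _.
have [f [f_inj h_f]] := exists_inj_cover h le_ekm.
apply: (sum_affine (f := f)); first by rewrite -row_free_unit; exact: M_indep.
move=> v w eq_vw; apply: eq_bigr => j _; have [i ->] := h_f j.
by have := congr1 (fun A : 'M_(k, 1) => A i ord0) eq_vw; rewrite !mxE => ->.
Qed.

End AffineSums.

Lemma sum_affine_plane (F : finFieldType) k l (M : 'M[F]_(k + l, k))
    (N : 'M[F]_(k + l, l)) (g : 'cV[F]_(k + l) -> nat) (c : 'cV[F]_(k + l)) :
    row_mx M N \in unitmx ->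
  (\sum_z \sum_y g (c + M *m y + N *m z)%R = \sum_v g v)%N.
Proof.
move=> MN_unit; rewrite exchange_big pair_big /=.
rewrite (reindex (fun w : 'cV[F]_(k + l) => (usubmx w, dsubmx w))) /=; last first.
  apply: onW_bij; exists (fun p => col_mx p.1 p.2) => [w|[y z]] /=.
    by rewrite vsubmxK.
  by rewrite col_mxKu col_mxKd.
rewrite (eq_bigr (fun w => g (c + row_mx M N *m w))) => [|w _]; last first.
  by rewrite -{3}(vsubmxK w) mul_row_col addrA.
apply/esym/(reindex_inj (h := fun w => c + row_mx M N *m w)) => w1 w2 /addrI.
exact: (can_inj (mulKmx MN_unit)).
Qed.

Lemma fixed_subr_uniq (F : fieldType) (V : lmodType F) (c : V) :
  c != 0 -> forall x y, c - x = x -> c - y = y -> x = y.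
Proof.
move=> c_neq0 x y /(canRL (subrK x)) cx /(canRL (subrK y)) cy.
have [two0|two_neq0] := eqVneq (2%:R : F) 0.
  by move: c_neq0; rewrite cx -mulr2n -scaler_nat two0 scale0r eqxx.
by apply: (scalerI two_neq0); rewrite !scaler_nat !mulr2n -cx -cy.
Qed.

Lemma natr_mul_S_e e n : (0 < n)%N ->
  n%:R * S_e e n = (\sum_(k < n ^ 2) k ^ e)%:R :> rat.
Proof. by move=> n_gt0; rewrite /S_e mulrC divfK // pnatr_eq0 -lt0n. Qed.

Section CMSConstruction.

Variables (F : finFieldType) (t : nat).
Local Notation n := (#|F| ^ t)%N.
Variable alpha : 'I_n -> 'cV[F]_t.
Hypothesis alpha_bij : bijective alpha.

Let n_gt0 : (0 < n)%N.
Proof. by rewrite expn_gt0 ltnW ?finNzRing_gt1. Qed.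

Lemma sum_alpha (G : 'cV[F]_t -> nat) : (\sum_(i < n) G (alpha i) = \sum_y G y)%N.
Proof. by rewrite [RHS](reindex alpha) //; exact: onW_bij. Qed.

Lemma sum_line_cv_nat_exp (M : 'M[F]_(t + t, t)) e (c : 'cV[F]_(t + t)) :
    any_rows_indep t M -> (e <= t)%N ->
  (\sum_(i < n) cv_nat (c + M *m alpha i)%R ^ e =
   (\sum_(v : 'cV[F]_(t + t)) cv_nat v ^ e) %/ n)%N.
Proof.
move=> M_indep le_et.
have le_ett : (e <= t <= t + t)%N by rewrite le_et leq_addr.
have /eqP := sum_affine_cv_nat_exp c M_indep le_ett; rewrite expnD -mulnA eqn_pmul2l //.
by move=> /eqP <-; rewrite mulKn // (sum_alpha (fun y => cv_nat (c + M *m y)%R ^ e)%N).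
Qed.

Lemma sum_plane_cv_nat_exp (M N : 'M[F]_(t + t, t)) e (c : 'cV[F]_(t + t)) :
    row_mx M N \in unitmx ->
  (\sum_(s < n) \sum_(i < n) cv_nat (c + M *m alpha i + N *m alpha s)%R ^ e =
   \sum_(k < n ^ 2) k ^ e)%N.
Proof.
move=> MN_unit; rewrite -expnM muln2 -addnn -sum_cv_nat_exp -(sum_affine_plane _ c MN_unit).
rewrite -(sum_alpha (fun z => \sum_y cv_nat (c + M *m y + N *m z)%R ^ e)%N).
by apply: eq_bigr => s _; rewrite (sum_alpha (fun y => cv_nat (c + M *m y + N *m alpha s)%R ^ e)%N).
Qed.

Variables E1 E2 E3 : 'M[F]_(t + t, t).

Definition cms_layer (s : 'I_n) : 'M[nat]_n :=
  \matrix_(i, j) cv_nat (E1 *m alpha i + E2 *m alpha j + E3 *m alpha s).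

Hypothesis alpha_rev : forall i, alpha (rev_ord i) = const_mx 1 - alpha i.

Lemma cms_layer_col s i j :
  cms_layer s i j = cv_nat (E2 *m alpha j + E1 *m alpha i + E3 *m alpha s).
Proof. by rewrite mxE (addrC (E1 *m _)). Qed.

Lemma cms_layer_diag s i :
  cms_layer s i i = cv_nat (0 + (E1 + E2) *m alpha i + E3 *m alpha s).
Proof. by rewrite mxE add0r mulmxDl. Qed.

Lemma cms_layer_adiag s i : cms_layer s i (rev_ord i) =
  cv_nat (E2 *m const_mx 1 + (E1 - E2) *m alpha i + E3 *m alpha s).
Proof.
rewrite mxE alpha_rev mulmxBr mulmxBl; congr (cv_nat (_ + _)).
by rewrite addrCA addrA.
Qed.

Section Layers.

Hypotheses (E1_indep : any_rows_indep t E1) (E2_indep : any_rows_indep t E2).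
Hypotheses (E1pE2_indep : any_rows_indep t (E1 + E2)).
Hypotheses (E1mE2_indep : any_rows_indep t (E1 - E2)).
Hypothesis E1E2_unit : row_mx E1 E2 \in unitmx.

Lemma cms_layer_inj s i j i' j' :
  cms_layer s i j = cms_layer s i' j' -> i = i' /\ j = j'.
Proof.
rewrite !mxE => /cv_nat_inj /addIr; rewrite -!mul_row_col.
move=> /(can_inj (mulKmx E1E2_unit)) /eq_col_mx [].
by move=> /(bij_inj alpha_bij) -> /(bij_inj alpha_bij) ->.
Qed.

Lemma cms_layer_MS s : is_MS t (cms_layer s).
Proof.
split; first by move=> i j; rewrite mxE -expnM muln2 -addnn cv_nat_lt.
split; first exact: cms_layer_inj.
move=> e /andP [_ le_et].
exists ((\sum_(v : 'cV[F]_(t + t)) cv_nat v ^ e) %/ n)%N.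
split; [|split; [|split]].
- move=> i; rewrite -(sum_line_cv_nat_exp (E1 *m alpha i + E3 *m alpha s) E2_indep le_et).
  by apply: eq_bigr => j _; rewrite mxE addrAC.
- move=> j; rewrite -(sum_line_cv_nat_exp (E2 *m alpha j + E3 *m alpha s) E1_indep le_et).
  by apply: eq_bigr => i _; rewrite cms_layer_col addrAC.
- rewrite -(sum_line_cv_nat_exp (0 + E3 *m alpha s) E1pE2_indep le_et).
  by apply: eq_bigr => i _; rewrite cms_layer_diag addrAC.
- rewrite -(sum_line_cv_nat_exp (E2 *m const_mx 1 + E3 *m alpha s) E1mE2_indep le_et).
  by apply: eq_bigr => i _; rewrite cms_layer_adiag addrAC.
Qed.

Hypotheses (E2E3_unit : row_mx E2 E3 \in unitmx) (E1E3_unit : row_mx E1 E3 \in unitmx).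
Hypothesis E1pE2E3_unit : row_mx (E1 + E2) E3 \in unitmx.
Hypothesis E1mE2E3_unit : row_mx (E1 - E2) E3 \in unitmx.

Lemma cms_layer_CMS : is_CMS t cms_layer.
Proof.
split; first exact: cms_layer_MS.
rewrite natr_mul_S_e //; split; [|split; [|split]]; try move=> ij; congr _%:R.
- rewrite -(sum_plane_cv_nat_exp _ (E1 *m alpha ij) E2E3_unit).
  by apply: eq_bigr => s _; apply: eq_bigr => j _; rewrite mxE.
- rewrite -(sum_plane_cv_nat_exp _ (E2 *m alpha ij) E1E3_unit).
  by apply: eq_bigr => s _; apply: eq_bigr => i _; rewrite cms_layer_col.
- rewrite -(sum_plane_cv_nat_exp _ 0 E1pE2E3_unit).
  by apply: eq_bigr => s _; apply: eq_bigr => i _; rewrite cms_layer_diag.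
- rewrite -(sum_plane_cv_nat_exp _ (E2 *m const_mx 1) E1mE2E3_unit).
  by apply: eq_bigr => s _; apply: eq_bigr => i _; rewrite cms_layer_adiag.
Qed.

End Layers.

End CMSConstruction.

Theorem lemma3p3 (F : finFieldType) (t : nat) (d : F)
  (E1 E2 : 'M[F]_(t + t, t)) :
  (2 <= t)%N ->
  any_rows_indep t E1 -> any_rows_indep t E2 ->
  any_rows_indep t (E1 + E2) -> any_rows_indep t (E1 - E2) ->
  row_mx E1 E2 \in unitmx ->
  row_mx E1 (E1 + d *: E2) \in unitmx ->
  row_mx E2 (E1 + d *: E2) \in unitmx ->
  row_mx (E1 + E2) (E1 + d *: E2) \in unitmx ->
  row_mx (E1 - E2) (E1 + d *: E2) \in unitmx ->
  exists B : 'I_(#|F| ^ t) -> 'M[nat]_(#|F| ^ t),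
    is_CMS t B.
Proof.
move=> le2t E1_indep E2_indep E1pE2_indep E1mE2_indep E1E2_unit.
move=> E1E3_unit E2E3_unit E1pE2E3_unit E1mE2E3_unit.
have one_neq0 : const_mx 1 != 0 :> 'cV[F]_t.
  apply/eqP => /matrixP /(_ (Ordinal (ltnW le2t)) ord0).
  by rewrite !mxE; exact/eqP/oner_neq0.
have card_cV : #|{: 'cV[F]_t}| = (#|F| ^ t)%N by rewrite card_mx muln1.
have [alpha [alpha_bij alpha_rev]] :=
  ord_enum_involutive (subKr (const_mx 1)) (fixed_subr_uniq one_neq0) card_cV.
by exists (cms_layer alpha E1 E2 (E1 + d *: E2)); exact: cms_layer_CMS.
Qed.
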